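(* Let $X$ be a pointed fibrant space over $B$ with section $s_X:B\to X$. Then $\mathrm{cat}^*_B(X)=\mathrm{secat}(s_X)$.
   Context: A fibrewise space over $B$ is a space $X$ with a map $p_X:X\to B$; a fibrewise pointed space is one with a section $s_X:B\to X$ of $p_X$. It is a pointed fibrant space over $B$ if moreover $p_X$ is a Hurewicz fibration. A fibrewise homotopy is a homotopy $H:U\times[0,1]\to X$ with $p_X(H(u,t))=p_U(u)$ for all $t$; write $\simeq_B$. $\mathrm{cat}^*_B(X)$ (fibrewise unpointed LS category): least $n$ such that $X$ is covered by $n+1$ open sets $U_i$ with the inclusion $U_i\hookrightarrow X$ fibrewise homotopic to $s_X\circ p_X|_{U_i}$ ($\infty$ if none). $\mathrm{secat}(g)$ for a map $g:Y\to Z$: least $n$ such that $Z$ is covered by $n+1$ open sets $U$ each admitting a map $s:U\to Y$ with $g\circ s$ homotopic to the inclusion $U\hookrightarrow Z$ ($\infty$ if none). *)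

From HB Require Import structures.
From mathcomp Require Import all_boot all_order all_algebra.
From mathcomp Require Import all_classical all_reals topology.
From mathcomp Require Import Rstruct Rstruct_topology.
From Stdlib Require Import Rdefinitions.
Set Implicit Arguments. Unset Strict Implicit. Unset Printing Implicit Defensive.
Import Order.TTheory GRing.Theory Num.Theory.
Local Open Scope classical_set_scope.
Local Open Scope ring_scope.

Definition unitI : set R := `[0%R, 1%R].

(* least n such that P n holds, or None (= infinity) if there is none *)
Definition least_or_inf (P : nat -> Prop) : option nat :=
  match pselect (exists n, P n) with
  | left h =>
      Some (@ex_minn (fun n => `[< P n >])
              (let: ex_intro n Pn := h in ex_intro _ n (asboolT Pn)))
  | right _ => None
  end.

Section Fibrewise.
Context {X B : topologicalType}.

Definition homotopy_on {Z : topologicalType} (U : set Z) (f g : Z -> X)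
    (H : Z * R -> X) : Prop :=
  {within U `*` unitI, continuous H} /\
  (forall u, U u -> H (u, 0%R) = f u /\ H (u, 1%R) = g u).

Definition fw_homotopic_on (pX : X -> B) (U : set X) (f g : X -> X) : Prop :=
  exists H : X * R -> X, homotopy_on U f g H /\
    (forall u t, U u -> unitI t -> pX (H (u, t)) = pX u).

Definition hurewicz_fibration (p : X -> B) : Prop :=
  forall (Y : topologicalType) (f : Y -> X) (G : Y * R -> B),
    continuous f -> {within setT `*` unitI, continuous G} ->
    (forall y, G (y, 0%R) = p (f y)) ->
    exists Ht : Y * R -> X,
      {within setT `*` unitI, continuous Ht} /\
      (forall y, Ht (y, 0%R) = f y) /\
      (forall y t, unitI t -> p (Ht (y, t)) = G (y, t)).

Definition pointed_fibrant (pX : X -> B) (sX : B -> X) : Prop :=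
  continuous pX /\ continuous sX /\ (forall b, pX (sX b) = b) /\
  hurewicz_fibration pX.

Definition open_cover_by {Z : topologicalType} (n : nat) (P : set Z -> Prop) : Prop :=
  exists U : 'I_n.+1 -> set Z,
    (forall i, open (U i)) /\ (forall i, P (U i)) /\
    (forall x, exists i, U i x).

(* fibrewise unpointed LS category; None = infinity *)
Definition catB (pX : X -> B) (sX : B -> X) : option nat :=
  least_or_inf (fun n => open_cover_by n
    (fun U => fw_homotopic_on pX U id (sX \o pX))).

End Fibrewise.

Definition secat {Y Z : topologicalType} (g : Y -> Z) : option nat :=
  least_or_inf (fun n => open_cover_by n
    (fun U : set Z => exists s : Z -> Y, {within U, continuous s} /\
        exists H : Z * R -> Z, homotopy_on U (g \o s) id H)).

(* A fibrewise null-homotopy [id ~ sX \o pX] on U makes [pX] a section of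
   [sX] over U up to homotopy.  Conversely, let [H] be a homotopy from
   [sX \o s] to the inclusion of U.  Running [H] backwards and then
   [sX \o pX \o H] forwards gives, for each [u], a path [detour u] from [u]
   to [sX (pX u)] whose projection is a path followed by its reverse.
   Shrinking that back-and-forth path to the constant path at [pX u], ends
   fixed, is a homotopy, which the Hurewicz property lifts to a square
   starting from [detour u].  The path [t |-> (t, height t)] in that square
   stays where the shrinking is constant at [pX u], so it runs in the fibre
   from [u] to [sX (pX u)], continuously in [u]: this is the required
   fibrewise homotopy.  Hence both invariants count the same open covers. *)
From mathcomp Require Import all_boot all_order all_algebra all_classical.
From mathcomp Require Import all_reals topology normedtype.
From mathcomp Require Import Rstruct Rstruct_topology lra.
Local Notation R := Rdefinitions.R.
Set Implicit Arguments.
Unset Strict Implicit.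
Unset Printing Implicit Defensive.
Import Order.TTheory GRing.Theory Num.Theory.
Local Open Scope classical_set_scope.
Local Open Scope ring_scope.

Lemma continuous_within_comp {S T Z : topologicalType} (A : set S) (B : set T)
    (g : S -> T) (f : T -> Z) :
  (forall x, A x -> B (g x)) -> {within A, continuous g} ->
  {within B, continuous f} -> {within A, continuous (f \o g)}.
Proof.
move=> AB /subspace_continuousP cg /subspace_continuousP cf.
apply/subspace_continuousP => x Ax W /(cf _ (AB _ Ax)) /(cg x Ax).
rewrite !nbhs_simpl /= /within /prop_near1 /=.
by apply: filterS => y gW Ay; exact: gW Ay (AB _ Ay).
Qed.

Lemma within_closed_cover_continuous {T Z : topologicalType} (S C1 C2 : set T)
    (f : T -> Z) :
  closed C1 -> closed C2 -> S `<=` C1 `|` C2 ->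
  {within S `&` C1, continuous f} -> {within S `&` C2, continuous f} ->
  {within S, continuous f}.
Proof.
move=> cC1 cC2 SC ct1 ct2; apply/continuous_closedP => W cW.
case/continuous_closedP/(_ _ cW)/closed_subspaceP: ct1 => V1 cV1 V1W.
case/continuous_closedP/(_ _ cW)/closed_subspaceP: ct2 => V2 cV2 V2W.
apply/closed_subspaceP; exists ((V1 `&` C1) `|` (V2 `&` C2)).
  by apply: closedU; exact: closedI.
rewrite /from_subspace in V1W V2W *.
by rewrite setIUl -!setIA (setIC C1) (setIC C2) V1W V2W -!setIUr (setIidl SC).
Qed.

Section subspace_prod.
Context {T Y Z : topologicalType} (A : set T) (I : set Y).

Lemma nbhs_subspace_setTX (x : T) (t : Y) : I t ->
  nbhs ((x, t) : subspace ([set: subspace A] `*` I)) =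
  nbhs ((x, t) : subspace A * subspace I).
Proof.
move=> It.
rewrite (@nbhs_prodX_subspace_inE (subspace A) Y [set: subspace A] I) //.
exact: (congr1 (filter_prod ^~ _) (@nbhs_subspaceT (subspace A) x)).
Qed.

Lemma nbhs_subspace_setTX_in (x : T) (t : Y) : A x -> I t ->
  nbhs ((x, t) : subspace ([set: subspace A] `*` I)) =
  nbhs ((x, t) : subspace (A `*` I)).
Proof.
move=> Ax It.
by rewrite nbhs_subspace_setTX // (@nbhs_prodX_subspace_inE T Y A I).
Qed.

Lemma subspace_setTX_continuous (F : T * Y -> Z) :
  {within [set: subspace A] `*` I, continuous (F : subspace A * Y -> Z)} ->
  {within A `*` I, continuous F}.
Proof.
move=> cF; rewrite continuous_subspace_in => -[x t] /set_mem[/= Ax It].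
by have := cF (x, t); rewrite /continuous_at nbhs_subspace_setTX_in.
Qed.

(* Outside [A] the subspace topology is discrete, so the patch [g] needs no
   continuity. *)
Lemma subspace_setTX_patch_continuous (F : T * Y -> Z) (g : T -> Z) :
  {within A `*` I, continuous F} ->
  {within [set: subspace A] `*` I,
    continuous (fun q : subspace A * Y => if `[< A q.1 >] then F q else g q.1)}.
Proof.
move=> cF; rewrite continuous_subspace_in => -[x t] /set_mem[_ /= It].
have [Ax|nAx] := pselect (A x).
  have : {within A `*` I,
      continuous (fun q : T * Y => if `[< A q.1 >] then F q else g q.1)}.
    apply: subspace_eq_continuous cF => -[y s] /set_mem[/= Ay _].
    by rewrite /from_subspace /= asboolT.
  by move/(_ (x, t)); rewrite /continuous_at nbhs_subspace_setTX_in.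
rewrite /continuous_at nbhs_subspace_setTX //.
rewrite {2}/from_subspace /= asboolF //; apply: cvg_near_cst.
exists ([set x], setT) => /=; first split => /=.
- have : globally [set x] [set x] by [].
  by rewrite (@nbhs_subspace_out T A x nAx).
- exact: filterT.
by move=> [y s] [/= -> _]; rewrite /from_subspace /= asboolF.
Qed.

End subspace_prod.

Section pointwise_continuity.
Context {T : topologicalType}.
Implicit Types f g : T -> R.

Lemma continuous_sub f g : continuous f -> continuous g ->
  continuous (fun x => f x - g x).
Proof. by move=> cf cg x; exact: (@cvgB _ R^o _ _ _ f g _ _ (cf x) (cg x)). Qed.

Lemma continuous_mul f g : continuous f -> continuous g ->
  continuous (fun x => f x * g x).
Proof. by move=> cf cg x; exact: (@cvgM _ _ _ _ f g _ _ (cf x) (cg x)). Qed.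

Lemma continuous_norm f : continuous f -> continuous (fun x => `|f x|).
Proof. by move=> cf x; exact: (@cvg_norm R R^o T (nbhs x) _ f _ (cf x)). Qed.

Lemma continuous_minr f g : continuous f -> continuous g ->
  continuous (fun x => Num.min (f x) (g x)).
Proof. by move=> cf cg x; exact: (continuous_min (cf x) (cg x)). Qed.

Lemma continuous_maxr f g : continuous f -> continuous g ->
  continuous (fun x => Num.max (f x) (g x)).
Proof. by move=> cf cg x; exact: (continuous_max (cf x) (cg x)). Qed.

End pointwise_continuity.

Section pair_continuity.
Context {T U V : topologicalType}.

Lemma continuous_pair (f : T -> U) (g : T -> V) :
  continuous f -> continuous g ->  continuous (fun x => (f x, g x)).
Proof. by move=> cf cg x; apply: cvg_pair; [exact: cf | exact: cg]. Qed.

Lemma continuous_fst (f : T -> U * V) : continuous f ->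
  continuous (fun x => (f x).1).
Proof. by move=> cf x; apply: continuous_comp (cf x) _; exact: cvg_fst. Qed.

Lemma continuous_snd (f : T -> U * V) : continuous f ->
  continuous (fun x => (f x).2).
Proof. by move=> cf x; apply: continuous_comp (cf x) _; exact: cvg_snd. Qed.

End pair_continuity.

Ltac continuity := repeat first
  [ exact: cst_continuous | move=> ?; exact: cvg_id
  | apply: continuous_pair | apply: continuous_fst | apply: continuous_snd
  | apply: continuous_sub | apply: continuous_mul | apply: continuous_norm
  | apply: continuous_minr | apply: continuous_maxr ].

Lemma unitIP (t : R) : unitI t <-> 0 <= t <= 1.
Proof. by rewrite /unitI /= in_itv. Qed.

Lemma homotopy_on_sym {Z X : topologicalType} (U : set Z) (f g : Z -> X)
    (H : Z * R -> X) :
  homotopy_on U f g H -> homotopy_on U g f (fun p => H (p.1, 1 - p.2)).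
Proof.
move=> [cH Hfg]; split.
  apply: continuous_within_comp cH.
    move=> [x t] [/= Ux /unitIP It]; split => //; apply/unitIP; lra.
  by apply: continuous_subspaceT; continuity.
by move=> u Uu; rewrite /= subr0 subrr; have [] := Hfg u Uu.
Qed.

Definition tent (a : R) : R := 1 - `|2 * a - 1|.

(* [bump] is supported in [[1/3, 2/3]], where [height] is already [1]. *)
Definition bump (a : R) : R := Num.max 0 (3 * tent a - 2).
Definition height (t : R) : R := Num.min 1 (2 * tent t).

Lemma tent_le1 (a : R) : tent a <= 1.
Proof. by rewrite /tent lerBlDr lerDl. Qed.

Lemma tent_ge0 (a : R) : 0 <= a <= 1 -> 0 <= tent a.
Proof.
move=> /andP[a0 a1]; rewrite /tent subr_ge0.
have [h|h] := lerP 0 (2 * a - 1).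
  by rewrite ger0_norm //; lra.
by rewrite ltr0_norm //; lra.
Qed.

Lemma tent0 : tent 0 = 0.
Proof. by rewrite /tent mulr0 sub0r normrN normr1 subrr. Qed.

Lemma tent1 : tent 1 = 0.
Proof. by rewrite /tent mulr1 ger0_norm; lra. Qed.

Lemma bump_ge0 (a : R) : 0 <= bump a.
Proof. by rewrite /bump le_max lexx. Qed.

Lemma bump_le1 (a : R) : bump a <= 1.
Proof. by rewrite /bump ge_max ler01 /=; have := tent_le1 a; lra. Qed.

Lemma bump0 : bump 0 = 0.
Proof. by rewrite /bump tent0 max_l //; lra. Qed.

Lemma bump1 : bump 1 = 0.
Proof. by rewrite /bump tent1 max_l //; lra. Qed.

Lemma bump_half (a : R) : 2 * a = 1 -> bump a = 1.
Proof.
by move=> a_half; rewrite /bump /tent a_half subrr normr0 max_r //; lra.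
Qed.

Lemma height_ge0 (t : R) : 0 <= t <= 1 -> 0 <= height t.
Proof. by move/tent_ge0 => ?; rewrite /height le_min ler01 /=; lra. Qed.

Lemma height_le1 (t : R) : height t <= 1.
Proof. by rewrite /height ge_min lexx. Qed.

Lemma height0 : height 0 = 0.
Proof. by rewrite /height tent0 mulr0 min_r // ler01. Qed.

Lemma height1 : height 1 = 0.
Proof. by rewrite /height tent1 mulr0 min_r // ler01. Qed.

Lemma height_bump (t : R) : (1 - height t) * bump t = 0.
Proof.
rewrite /height /bump; have [h|h] := lerP 1 (2 * tent t).
  by rewrite subrr mul0r.
by rewrite [Num.max _ _]max_l ?mulr0 //; lra.
Qed.

Section sectional_to_fibrewise.
Context {X B : topologicalType} (pX : X -> B) (sX : B -> X) (U : set X)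
  (s : X -> B) (H : X * R -> X).
Hypotheses (pX_cont : continuous pX) (sX_cont : continuous sX)
  (pXK : cancel sX pX) (pX_fib : hurewicz_fibration pX)
  (H_cont : {within U `*` unitI, continuous H})
  (H0 : forall u, U u -> H (u, 0) = sX (s u))
  (H1 : forall u, U u -> H (u, 1) = u).

Definition detour (p : X * R) : X :=
  let x := H (p.1, 1 - bump p.2) in if 2 * p.2 <= 1 then x else sX (pX x).

Definition shrink (q : (X * R) * R) : B :=
  pX (H (q.1.1, 1 - (1 - q.2) * bump q.1.2)).

Lemma detour_continuous : {within U `*` unitI, continuous detour}.
Proof.
pose rep := H \o fun p : X * R => (p.1, 1 - bump p.2).
have rep_cont : {within U `*` unitI, continuous rep}.
  apply: continuous_within_comp H_cont.
    move=> [u a] [/= Uu _]; split => //; apply/unitIP.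
    by have := bump_ge0 a; have := bump_le1 a; lra.
  by apply: continuous_subspaceT; rewrite /bump /tent; continuity.
have double_cont : continuous (fun p : X * R => 2 * p.2) by continuity.
apply: (within_closed_cover_continuous
  (C1 := [set p : X * R | 2 * p.2 <= 1])
  (C2 := [set p : X * R | 1 <= 2 * p.2])).
- exact: preimage_closed (in1W double_cont) (@closed_le R 1).
- exact: preimage_closed (in1W double_cont) (@closed_ge R 1).
- move=> p _ /=; have [h|h] := lerP (2 * p.2) 1; [left | right] => //.
  exact: ltW.
- apply: subspace_eq_continuous
    (continuous_subspaceW (@subIsetl _ _ _) rep_cont).
  by move=> p /set_mem[_ /= h]; rewrite /from_subspace /detour /= h.
apply: (subspace_eq_continuous (f := sX \o pX \o rep)).
  move=> [u a] /set_mem[[/= Uu _] /= h]; rewrite /from_subspace /detour /=.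
  case: ifP => // h'; rewrite /rep /= bump_half; last by lra.
  by rewrite subrr H0 // pXK.
apply: within_continuous_comp (continuous_subspaceW (@subIsetl _ _ _) rep_cont).
by apply: in1W => x; apply: continuous_comp; [exact: pX_cont | exact: sX_cont].
Qed.

Lemma shrink_continuous : {within (U `*` unitI) `*` unitI, continuous shrink}.
Proof.
rewrite /shrink; apply: (@within_continuous_comp _ _ _ _ _ pX).
  exact: in1W.
apply: continuous_within_comp H_cont.
  move=> [[u a] r] [[/= Uu _] /unitIP /= /andP[r0 r1]]; split => //.
  by apply/unitIP; have := bump_ge0 a; have := bump_le1 a; nra.
by apply: continuous_subspaceT; rewrite /bump /tent; continuity.
Qed.

Lemma shrink0 (p : X * R) : shrink (p, 0) = pX (detour p).
Proof. by rewrite /shrink /detour /= subr0 mul1r; case: ifP; rewrite ?pXK. Qed.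

Lemma shrink_height (u : X) (t : R) : U u -> shrink ((u, t), height t) = pX u.
Proof. by move=> Uu; rewrite /shrink /= height_bump subr0 H1. Qed.

Lemma detour0 (u : X) : U u -> detour (u, 0) = u.
Proof. by move=> Uu; rewrite /detour /= mulr0 ler01 bump0 subr0 H1. Qed.

Lemma detour1 (u : X) : U u -> detour (u, 1) = sX (pX u).
Proof.
move=> Uu; rewrite /detour /= mulr1 bump1 subr0 H1 //.
by rewrite ifF //; apply/negP; lra.
Qed.

Lemma fw_homotopic_of_section : fw_homotopic_on pX U id (sX \o pX).
Proof.
have G_cont :=
  subspace_setTX_patch_continuous (g := pX \o detour) shrink_continuous.
have [|L [L_cont [L0 L_fib]]] := pX_fib detour_continuous G_cont.
  by move=> y /=; case: asboolP => // _; rewrite shrink0.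
have L_cont' :
    {within (U `*` unitI) `*` unitI, continuous (L : (X * R) * R -> X)}.
  exact: subspace_setTX_continuous.
exists (fun p : X * R => L (p, height p.2)); split; first split.
- apply: continuous_within_comp L_cont'.
    move=> [u t] [/= Uu /unitIP It]; split => //; apply/unitIP.
    by rewrite height_le1 height_ge0.
  by apply: continuous_subspaceT; rewrite /height /tent; continuity.
- move=> u Uu; rewrite /= height0 height1 !L0.
  by split; [exact: detour0 | exact: detour1].
move=> u t Uu It; rewrite /= L_fib; first by rewrite asboolT // shrink_height.
by apply/unitIP; rewrite height_le1 height_ge0 //; apply/unitIP.
Qed.

End sectional_to_fibrewise.

Lemma section_of_fw_homotopic {X B : topologicalType} (pX : X -> B)
    (sX : B -> X) (U : set X) :
  continuous pX -> fw_homotopic_on pX U id (sX \o pX) ->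
  exists s : X -> B, {within U, continuous s} /\
    exists H : X * R -> X, homotopy_on U (sX \o s) id H.
Proof.
move=> pX_cont [H [hH _]]; exists pX; split; first exact: continuous_subspaceT.
by exists (fun p => H (p.1, 1 - p.2)); exact: homotopy_on_sym.
Qed.

Lemma fw_homotopic_iff_section {X B : topologicalType} (pX : X -> B)
    (sX : B -> X) (U : set X) :
  pointed_fibrant pX sX ->
  fw_homotopic_on pX U id (sX \o pX) <->
  exists s : X -> B, {within U, continuous s} /\
    exists H : X * R -> X, homotopy_on U (sX \o s) id H.
Proof.
case=> pX_cont [sX_cont [pXK pX_fib]]; split.
  exact: section_of_fw_homotopic.
move=> [s [_ [H [H_cont Hends]]]].
by apply: (fw_homotopic_of_section (s := s) pX_cont sX_cont pXK pX_fib H_cont)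
  => u Uu; case: (Hends u Uu).
Qed.

Lemma open_cover_by_iff {Z : topologicalType} (n : nat) (P Q : set Z -> Prop) :
  (forall U, P U <-> Q U) -> open_cover_by n P <-> open_cover_by n Q.
Proof.
by move=> PQ; split=> -[V [oV [PV cov]]]; exists V; split=> //; split=> // i;
  apply/PQ.
Qed.

Theorem corollary2p10 (B X : topologicalType) (pX : X -> B) (sX : B -> X) :
  pointed_fibrant pX sX -> catB pX sX = secat sX.
Proof.
move=> pX_fibrant; rewrite /catB /secat; congr least_or_inf.
apply: funext => n; apply/propext/open_cover_by_iff => U.
exact: fw_homotopic_iff_section.
Qed.
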